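(* Fix a finite alphabet $\Sigma$. For every $C_7\in\mathbb{N}$ there exists $C_9$, bounded by a polynomial in $C_7$ (the polynomial depending only on $|\Sigma|$), such that the following holds. Let $P,Q\subseteq[0..C_7]^\Sigma$ with $0\notin P$, $0\notin Q$, and $\bigoplus_{\mathbb{P}}P\cap\bigoplus_{\mathbb{P}}Q=\{0\}$. Then there is a linear function $\Phi:\mathbb{Q}^\Sigma\to\mathbb{Q}$ with integer coefficients, $\Phi(x)=\sum_{\sigma\in\Sigma}\phi_\sigma x_\sigma$ with $\phi\in\mathbb{Z}^\Sigma$, such that $\Phi(p)>0$ for all $p\in P$, $\Phi(q)<0$ for all $q\in Q$, and $\sum_\sigma|\phi_\sigma|\le C_9$.
   Context: $[0..C]=\{0,1,\ldots,C\}$; $\mathbb{P}$ is the set of non-negative rationals; for a set $B$ of vectors, $\bigoplus_{\mathbb{P}}B=\{\sum_{b\in B}\alpha_b b:\alpha_b\in\mathbb{P}\text{ for all } b\in B\}$. *)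

From HB Require Import structures.
From mathcomp Require Import all_boot all_order all_algebra.
Set Implicit Arguments. Unset Strict Implicit. Unset Printing Implicit Defensive.
Import Order.TTheory GRing.Theory Num.Theory.
Local Open Scope ring_scope.

Definition zvec (S : finType) : {ffun S -> nat} := [ffun => 0%N].

Definition pcone (S : finType) (B : {ffun S -> nat} -> Prop) (x : S -> rat) : Prop :=
  exists s : seq ({ffun S -> nat} * rat),
    (forall pa, pa \in s -> B pa.1 /\ 0 <= pa.2) /\
    forall a : S, x a = \sum_(pa <- s) pa.2 * (pa.1 a)%:R.

Definition linval (S : finType) (phi : S -> int) (p : {ffun S -> nat}) : int :=
  \sum_(a : S) phi a * (p a)%:Z.

From mathcomp Require Import all_boot all_order all_algebra zify ring.
From Stdlib Require Import Classical.
Import Order.TTheory GRing.Theory Num.Theory.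
Local Open Scope ring_scope.

(* Fourier-Motzkin elimination with size control.  Put V = P u (-Q) in Z^n.
   The cone condition says that no nonempty finite multiset of V sums to 0, and
   we look for phi with phi.v >= 1 on V.  Eliminating the last coordinate
   replaces V by V' = {v in V | v_n = 0} u {|w_n| u + u_n w | u_n > 0 > w_n},
   which inherits the condition and has entries bounded by 2C^2 when those of V
   are bounded by C.  A separator psi of V' is extended to one of V by scaling
   it with C^2 + 1 and choosing the least suitable integer for the last
   coefficient; the scaling absorbs the rounding error of that choice.  Each
   elimination step squares the entry bound, so after |Sigma| steps the
   coefficients are polynomial in C. *)

Definition dot (n : nat) (phi v : nat -> int) : int := \sum_(i < n) phi i * v i.

Definition bounded_by (C : nat) (V : (nat -> int) -> Prop) : Prop :=
  forall v, V v -> forall i, `|v i| <= C%:Z.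

Definition zero_sum_free (n : nat) (V : (nat -> int) -> Prop) : Prop :=
  forall s : seq (nat -> int), s <> [::] -> (forall v, List.In v s -> V v) ->
  exists2 i, (i < n)%N & \sum_(v <- s) v i != 0.

Lemma dot_bound n (psi v : nat -> int) (C : nat) :
  (forall i, `|v i| <= C%:Z) ->
  `|dot n psi v| <= (\sum_(i < n) `|psi i|)%N%:Z * C%:Z.
Proof.
move=> hv; rewrite /dot (le_trans (ler_norm_sum _ _ _)) //.
rewrite -[X in X * _]natz natr_sum mulr_suml; apply: ler_sum => i _.
by rewrite normrM natz abszE; apply: ler_wpM2l.
Qed.

Lemma dotDZ n (phi u w : nat -> int) (a b : int) :
  dot n phi (fun i => a * u i + b * w i) = a * dot n phi u + b * dot n phi w.
Proof. by rewrite /dot !mulr_sumr -big_split /=; apply: eq_bigr => i _; ring. Qed.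

Lemma dotN n (phi v : nat -> int) : dot n phi (fun i => - v i) = - dot n phi v.
Proof. by rewrite /dot -sumrN; apply: eq_bigr => i _; rewrite mulrN. Qed.

Lemma sum_nseq (k : nat) (u : nat -> int) i : \sum_(v <- nseq k u) v i = k%:Z * u i.
Proof.
elim: k => [|k IH]; first by rewrite big_nil mul0r.
by rewrite /= big_cons IH -addn1 PoszD mulrDl mul1r addrC.
Qed.

Lemma In_nseq {T : Type} {k : nat} {u v : T} : List.In v (nseq k u) -> v = u.
Proof. by elim: k => //= k IH [->|/IH]. Qed.

Lemma sum_In_eq0 (s : seq (nat -> int)) i :
  (forall v, List.In v s -> v i = 0) -> \sum_(v <- s) v i = 0.
Proof.
elim: s => [|x s IH] h; first by rewrite big_nil.
by rewrite big_cons h ?IH ?add0r //= => [v hv|]; [apply: h; right|left].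
Qed.

Lemma least_int_in_range (T : int -> Prop) (M : nat) : T M%:Z ->
  exists t, [/\ T t, `|t| <= M%:Z & t = - M%:Z \/ ~ T (t - 1)].
Proof.
move=> TM.
suff: forall s : nat, T (s%:Z - M%:Z) ->
    exists t, [/\ T t, - M%:Z <= t <= s%:Z - M%:Z & t = - M%:Z \/ ~ T (t - 1)].
  move=> /(_ (2 * M)%N); have -> : (2 * M)%N%:Z - M%:Z = M%:Z by lia.
  by move=> /(_ TM) [t [Tt ht ht']]; exists t; split => //; rewrite ler_norml.
elim=> [|s IH] Ts.
  by exists (0%:Z - M%:Z); split => //; [lia | left; rewrite sub0r].
case: (classic (T (s%:Z - M%:Z))) => [/IH [t [Tt ht ht']]|nT].
  by exists t; split => //; lia.
exists (s.+1%:Z - M%:Z); split => //; first lia.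
by right; have -> : s.+1%:Z - M%:Z - 1 = s%:Z - M%:Z by lia.
Qed.

Section Elimination.

Variables (n C : nat) (V : (nat -> int) -> Prop).
Hypothesis V_bounded : bounded_by C V.

Definition comb (u w : nat -> int) : nat -> int := fun i => - w n * u i + u n * w i.

Definition eliminate : (nat -> int) -> Prop := fun v =>
  (V v /\ v n = 0) \/ exists u w, [/\ V u, V w, 0 < u n, w n < 0 & v = comb u w].

Lemma eliminate_bounded : bounded_by (2 * C * C) eliminate.
Proof.
move=> v [[Vv _]|[u [w [Vu Vw _ _ ->]]]] i.
  by apply: (le_trans (V_bounded _ Vv i)); rewrite lez_nat; nia.
rewrite /comb (le_trans (ler_normD _ _)) // !normrM normrN.
have -> : (2 * C * C)%N%:Z = C%:Z * C%:Z + C%:Z * C%:Z by lia.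
by apply: lerD; apply: ler_pM => //; apply: V_bounded.
Qed.

Lemma eliminate_unfold {s' : seq (nat -> int)} :
  (forall v, List.In v s' -> eliminate v) ->
  exists s : seq (nat -> int), [/\ forall v, List.In v s -> V v,
    s' <> [::] -> s <> [::] & forall i, \sum_(v <- s) v i = \sum_(v <- s') v i].
Proof.
elim: s' => [|x s' IH] hs; first by exists [::].
have [s [Vs _ sum_s]] := IH (fun v hv => hs v (or_intror hv)).
case: (hs x (or_introl erefl)) => [[Vx _]|[u [w [Vu Vw hu hw ->]]]].
  exists (x :: s); split => [v [<-|/Vs]||i] //.
  by rewrite !big_cons sum_s.
exists (nseq `|w n|%N u ++ nseq `|u n|%N w ++ s); split.
- by move=> v /List.in_app_iff [/In_nseq ->|/List.in_app_iff [/In_nseq ->|/Vs]].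
- have : (0 < `|w n|)%N by lia.
  by case: `|w n|%N.
- move=> i; rewrite !big_cat /= !sum_nseq big_cons sum_s /comb !abszE.
  by rewrite (ltr0_norm hw) (gtr0_norm hu); ring.
Qed.

Lemma eliminate_zero_sum_free : zero_sum_free n.+1 V -> zero_sum_free n eliminate.
Proof.
move=> zsf s' s'_nil s'_elim.
have [s [Vs s_nil sum_s]] := eliminate_unfold s'_elim.
have [i lt_i_Sn] := zsf s (s_nil s'_nil) Vs; rewrite sum_s => sum_i_neq0.
exists i => //; move: lt_i_Sn; rewrite ltnS leq_eqVlt => /orP [/eqP i_n|//].
move: sum_i_neq0; rewrite i_n sum_In_eq0 // => v /s'_elim.
by case=> [[_ ->]|[u [w [_ _ _ _ ->]]]] //; rewrite /comb; ring.
Qed.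

Lemma extend_separator (psi : nat -> int) :
  (forall v, eliminate v -> 1 <= dot n psi v) ->
  exists t : int,
    `|t| <= ((C * C + 1) * (\sum_(i < n) `|psi i|) * C + 1)%N%:Z /\
    forall v, V v -> 1 <= (C * C + 1)%N%:Z * dot n psi v + t * v n.
Proof.
move=> psi_sep.
set k := (C * C + 1)%N; set M := (k * _ * C + 1)%N.
have a_lt : forall v, V v -> `|k%:Z * dot n psi v| < M%:Z.
  move=> v Vv; rewrite normrM.
  have := ler_wpM2l (ler0n _ k) (@dot_bound n psi v C (V_bounded _ Vv)).
  rewrite /M; lia.
pose T t := forall u, V u -> 0 < u n -> 0 < u n * t + k%:Z * dot n psi u.
have [t [Tt t_le t_least]] : exists t, [/\ T t, `|t| <= M%:Z & t = - M%:Z \/ ~ T (t - 1)].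
  by apply: least_int_in_range => u Vu hu; have := a_lt u Vu; nia.
exists t; split => // v Vv.
have vn_le := V_bounded _ Vv n.
have [vn_lt0|vn_gt0|vn_eq0] := ltrgtP (v n) 0; first last.
- have := psi_sep v (or_introl (conj Vv vn_eq0)); rewrite vn_eq0; nia.
- by have := Tt v Vv vn_gt0; lia.
case: t_least => [t_eq|t_pred_fails].
  by have := a_lt v Vv; rewrite t_eq; nia.
have [u [Vu un_gt0 u_fails]] : exists u, [/\ V u, 0 < u n &
    u n * (t - 1) + k%:Z * dot n psi u <= 0].
  apply: NNPP => no_u; apply: t_pred_fails => u Vu un_gt0.
  by rewrite ltNge; apply/negP => u_fails; apply: no_u; exists u.
have un_le := V_bounded _ Vu n.
(* Separation of comb u v by psi beats the rounding loss u_n |v_n| <= C^2 < k. *)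
have comb_sep : k%:Z <= k%:Z * (- v n * dot n psi u + u n * dot n psi v).
  rewrite -[X in X <= _]mulr1 ler_wpM2l // -dotDZ.
  exact: psi_sep (or_intror (ex_intro _ u (ex_intro _ v (And5 Vu Vv un_gt0 vn_lt0 erefl)))).
have loss : u n * (- v n) <= C%:Z * C%:Z.
  by apply: ler_pM; lia.
have fails_scaled : - v n * (u n * (t - 1) + k%:Z * dot n psi u) <= 0.
  by apply: mulr_ge0_le0 => //; lia.
have k_def : k%:Z = C%:Z * C%:Z + 1 by rewrite /k; lia.
rewrite k_def in comb_sep fails_scaled *; nia.
Qed.

End Elimination.

Arguments eliminate_bounded {n C V}.
Arguments eliminate_zero_sum_free {n V}.
Arguments extend_separator {n C V}.

Fixpoint separator_bound (n C : nat) : nat :=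
  if n is m.+1 then ((C * C + 1) * (C + 1) * separator_bound m (2 * C * C) + 1)%N
  else 0%N.

Definition extend (n : nat) (psi : nat -> int) (k : nat) (t : int) : nat -> int :=
  fun i => if i == n then t else k%:Z * psi i.

Lemma dot_extend n psi k t v :
  dot n.+1 (extend n psi k t) v = k%:Z * dot n psi v + t * v n.
Proof.
rewrite /dot big_ord_recr /= /extend eqxx mulr_sumr; congr (_ + _).
by apply: eq_bigr => i _; rewrite (ltn_eqF (ltn_ord i)) mulrA.
Qed.

Lemma norm_extend n psi k t :
  (\sum_(i < n.+1) `|extend n psi k t i| = k * \sum_(i < n) `|psi i| + `|t|)%N.
Proof.
rewrite big_ord_recr /= /extend eqxx big_distrr /=; congr (_ + _)%N.
by apply: eq_bigr => i _; rewrite (ltn_eqF (ltn_ord i)) abszM.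
Qed.

Theorem separator_exists n C V : bounded_by C V -> zero_sum_free n V ->
  exists phi : nat -> int, (\sum_(i < n) `|phi i| <= separator_bound n C)%N /\
    forall v, V v -> 1 <= dot n phi v.
Proof.
elim: n C V => [|n IH] C V V_bounded zsf.
  exists (fun _ => 0); split => [|v Vv]; first by rewrite big_ord0.
  by case: (zsf [:: v]) => // w [<-|[]].
have [psi [psi_norm psi_sep]] :=
  IH _ _ (eliminate_bounded V_bounded) (eliminate_zero_sum_free zsf).
have [t [t_le t_sep]] := extend_separator V_bounded psi psi_sep.
exists (extend n psi (C * C + 1) t); split => [|v Vv]; last first.
  by rewrite dot_extend; exact: t_sep.
rewrite norm_extend /=; set k := (C * C + 1)%N; set S := (\sum_(i < n) _)%N.
have t_le' : (`|t| <= k * S * C + 1)%N by lia.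
apply: leq_trans (leq_add (leqnn _) t_le') _.
have -> : (k * S + (k * S * C + 1) = k * (C + 1) * S + 1)%N by ring.
by rewrite leq_add2r leq_mul2l psi_norm orbT.
Qed.

Fixpoint separator_deg (n : nat) : nat :=
  if n is m.+1 then (2 * separator_deg m + 3)%N else 0%N.

Fixpoint separator_coef (n : nat) : nat :=
  if n is m.+1 then (separator_coef m * 2 ^ separator_deg m + 1)%N else 0%N.

Lemma separator_bound_poly n C :
  (separator_bound n C <= separator_coef n * C.+1 ^ separator_deg n)%N.
Proof.
elim: n C => [//|n IH] C /=.
set d := separator_deg n; set X := (separator_coef n * 2 ^ d)%N.
set Y := (C.+1 ^ d)%N.
have IH' : (separator_bound n (2 * C * C) <= X * (Y * Y))%N.
  apply: leq_trans (IH _) _; rewrite /X /Y -/d -[X in (_ <= X)%N]mulnA leq_mul2l -!expnMn.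
  apply/orP; right; have [->//|d_gt0] := posnP d.
  by rewrite leq_exp2r //; nia.
have -> : (C.+1 ^ (2 * d + 3) = C.+1 ^ 3 * (Y * Y))%N.
  by rewrite /Y -!expnD; congr expn; lia.
apply: leq_trans (_ : (C.+1 ^ 3 * (X * (Y * Y)) + 1 <= _)%N); last by nia.
by rewrite leq_add2r; apply: leq_mul => //; nia.
Qed.

Lemma seq_lift {A : eqType} {B : Type} {R : A -> Prop} {f : A -> B} {s : seq B} :
  (forall b, List.In b s -> exists2 a, R a & b = f a) ->
  exists2 t : seq A, (forall a, a \in t -> R a) & s = map f t.
Proof.
elim: s => [|b s IH] s_img; first by exists [::].
have [t t_R ->] := IH (fun b' hb' => s_img b' (or_intror hb')).
have [a Ra ->] := s_img b (or_introl erefl).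
by exists (a :: t) => // a'; rewrite inE => /predU1P [->|/t_R].
Qed.

Section Encoding.

Variables (S : finType) (P Q : {ffun S -> nat} -> Prop).

Lemma pcone_sum {B : {ffun S -> nat} -> Prop} {r : seq {ffun S -> nat}} {x : S -> rat} :
  (forall p, p \in r -> B p) -> (forall a, x a = (\sum_(p <- r) p a)%:R) -> pcone B x.
Proof.
move=> r_B x_sum; exists [seq (p, 1) | p <- r]; split.
  by move=> _ /mapP [p p_r ->]; split; [exact: r_B|].
by move=> a; rewrite x_sum big_map natr_sum; apply: eq_bigr => p _; rewrite mul1r.
Qed.

(* Coordinate i is the value at the i-th element of enum S; 0 beyond #|S|. *)
Definition enc (p : {ffun S -> nat}) : nat -> int :=
  fun i => oapp (fun j : 'I_#|S| => (p (enum_val j))%:Z) 0 (insub i).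

Lemma enc_rank p a : enc p (enum_rank a) = (p a)%:Z.
Proof. by rewrite /enc valK /= enum_rankK. Qed.

Lemma linval_dot (phi : nat -> int) p :
  linval (fun a => phi (enum_rank a)) p = dot #|S| phi (enc p).
Proof.
rewrite /linval /dot big_enum_val; apply: eq_bigr => i _.
by rewrite -enc_rank enum_valK.
Qed.

Definition signed_enc (pb : {ffun S -> nat} * bool) : nat -> int :=
  fun i => if pb.2 then enc pb.1 i else - enc pb.1 i.

Definition on_side (pb : {ffun S -> nat} * bool) : Prop :=
  if pb.2 then P pb.1 else Q pb.1.

Definition signed_image (v : nat -> int) : Prop :=
  exists2 pb, on_side pb & v = signed_enc pb.

Lemma signed_image_bounded (C : nat) :
  (forall p, P p -> forall a, (p a <= C)%N) ->
  (forall q, Q q -> forall a, (q a <= C)%N) -> bounded_by C signed_image.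
Proof.
move=> P_le Q_le _ [[p []] side ->] i; rewrite /signed_enc /enc ?normrN /=;
  case: insub => [j|] //=; rewrite -!natz normr_nat ler_nat; [exact: P_le | exact: Q_le].
Qed.

Lemma sum_signed_enc (t : seq ({ffun S -> nat} * bool)) a :
  \sum_(pb <- t) signed_enc pb (enum_rank a) =
  (\sum_(p <- [seq pb.1 | pb <- t & pb.2]) p a)%N%:Z -
  (\sum_(p <- [seq pb.1 | pb <- t & ~~ pb.2]) p a)%N%:Z.
Proof.
rewrite (bigID (fun pb => pb.2)) /= !big_map !big_filter -!natz !natr_sum -sumrN.
by congr (_ + _); apply: eq_bigr => pb;
  [move=> pb2 | move=> /negbTE pb2]; rewrite /signed_enc pb2 enc_rank natz.
Qed.

Lemma signed_image_zero_sum_free :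
  ~ P (zvec S) -> ~ Q (zvec S) ->
  (forall x : S -> rat, pcone P x -> pcone Q x -> forall a, x a = 0) ->
  zero_sum_free #|S| signed_image.
Proof.
move=> nP nQ cone s s_nil s_img; apply: NNPP => s_sum_neq0.
have s_sum0 i : (i < #|S|)%N -> \sum_(v <- s) v i = 0.
  by move=> lt_i; apply/eqP/negPn/negP => neq0; apply: s_sum_neq0; exists i.
have [t t_side s_t] := seq_lift s_img; rewrite {}s_t in s_nil s_sum0.
set tP := [seq pb.1 | pb <- t & pb.2]; set tQ := [seq pb.1 | pb <- t & ~~ pb.2].
have sides_eq a : (\sum_(p <- tP) p a = \sum_(p <- tQ) p a)%N.
  have := s_sum0 _ (ltn_ord (enum_rank a)); rewrite big_map sum_signed_enc.
  by move=> /eqP; rewrite subr_eq0 eqz_nat => /eqP.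
have tP_P p : p \in tP -> P p.
  by case/mapP=> pb; rewrite mem_filter => /andP [pb2 /t_side]; rewrite /on_side pb2 => ? ->.
have tQ_Q q : q \in tQ -> Q q.
  case/mapP=> pb; rewrite mem_filter => /andP [pb2 /t_side].
  by rewrite /on_side (negbTE pb2) => ? ->.
pose x a : rat := (\sum_(p <- tP) p a)%:R.
have x0 : forall a, x a = 0.
  by apply: cone; [exact: pcone_sum tP_P _ | apply: pcone_sum tQ_Q _ => a; rewrite /x sides_eq].
have t_sum0 a : (\sum_(pb <- t) pb.1 a = 0)%N.
  have /eqP := x0 a; rewrite pnatr_eq0 => /eqP tP_sum0.
  have tQ_sum0 : (\sum_(p <- tQ) p a = 0)%N by rewrite -sides_eq.
  move: tP_sum0 tQ_sum0; rewrite (bigID (fun pb => pb.2)) /= !big_map !big_filter.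
  by move=> -> ->.
clear x0 x tP_P tQ_Q sides_eq tP tQ s_sum0.
case: t s_nil t_side t_sum0 => [//|pb t] _ t_side t_sum0.
have pb0 : pb.1 = zvec S.
  by apply/ffunP => a; rewrite ffunE; have := t_sum0 a; rewrite big_cons; lia.
by have := t_side pb (mem_head _ _); rewrite /on_side pb0; case: pb.2.
Qed.

End Encoding.

Arguments signed_image_bounded {S P Q C}.
Arguments signed_image_zero_sum_free {S P Q}.

Theorem lemma8 :
  exists (c d : nat -> nat),
  forall (S : finType) (C7 : nat),
  exists C9 : nat,
    (C9 <= c #|S| * (C7.+1) ^ (d #|S|))%N /\
    forall (P Q : {ffun S -> nat} -> Prop),
      (forall p, P p -> forall a, (p a <= C7)%N) ->
      (forall q, Q q -> forall a, (q a <= C7)%N) ->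
      ~ P (zvec S) -> ~ Q (zvec S) ->
      (forall x : S -> rat, pcone P x -> pcone Q x -> forall a, x a = 0) ->
      exists phi : S -> int,
        (forall p, P p -> 0 < linval phi p) /\
        (forall q, Q q -> linval phi q < 0) /\
        (\sum_(a : S) `|phi a| <= C9)%N.
Proof.
exists separator_coef, separator_deg => S C7.
exists (separator_coef #|S| * C7.+1 ^ separator_deg #|S|)%N; split=> // P Q P_le Q_le nP nQ cone.
have [phi [phi_norm phi_sep]] := separator_exists _ _ _ (signed_image_bounded P_le Q_le)
  (signed_image_zero_sum_free nP nQ cone).
exists (fun a => phi (enum_rank a)); split; [|split].
- move=> p Pp; rewrite linval_dot.
  exact: lt_le_trans ltr01 (phi_sep _ (ex_intro2 _ _ (p, true) Pp erefl)).
- move=> q Qq; rewrite linval_dot -oppr_gt0 -dotN.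
  exact: lt_le_trans ltr01 (phi_sep _ (ex_intro2 _ _ (q, false) Qq erefl)).
- rewrite big_enum_val; under eq_bigr do rewrite enum_valK.
  exact: leq_trans phi_norm (separator_bound_poly _ _).
Qed.
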